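(* Let $\lambda\in[0,\frac{\pi}{2})$ and let $(|B(\lambda)\rangle,\mathcal{M})$, $\mathcal{M}=(M_1,M_2,M_3)$, be a maximally impossible quantum scenario. Then $|M_1|=|M_2|$.
   Context: For $\varphi\in\mathbb{R}$, $E_\varphi=\cos\varphi X+\sin\varphi Y$ is the equatorial measurement, with $+1$ eigenvector $|\varphi\rangle=\frac{1}{\sqrt2}(|0\rangle+e^{i\varphi}|1\rangle)$ and $-1$ eigenvector $|\varphi+\pi\rangle$; outcomes $+1,-1$ relabelled $0,1$; measurements identified with angles. A measurement scenario $\mathcal{M}=(M_1,M_2,M_3)$ consists of finite nonempty sets $M_i\subseteq[0,\pi)$ of angles for qubit $i$. For a three-qubit state $|\psi\rangle$, the event $(A,B,C)\to(a,b,c)$ with $(A,B,C)\in M_1\times M_2\times M_3$ is impossible if $(\langle A+a\pi|\otimes\langle B+b\pi|\otimes\langle C+c\pi|)|\psi\rangle=0$. For $\lambda\in[0,\frac{\pi}{2})$, $|v_\lambda\rangle=\cos\frac{\lambda}{2}|0\rangle+\sin\frac{\lambda}{2}|1\rangle$, $|w_\lambda\rangle=\sin\frac{\lambda}{2}|0\rangle+\cos\frac{\lambda}{2}|1\rangle$, and the interpolant state is $|B(\lambda)\rangle=\frac{1}{\sqrt2}(|00\rangle|v_\lambda\rangle+|11\rangle|w_\lambda\rangle)$. The quantum scenario $(|B(\lambda)\rangle,\mathcal{M})$ is maximally impossible if for every $C\in M_3$ and every $z\in\{0,1\}$: for every $A\in M_1$ there exist $B\in M_2$ and $a,b\in\{0,1\}$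 with $(A,B,C)\to(a,b,z)$ impossible, and for every $B\in M_2$ there exist $A\in M_1$ and $a,b\in\{0,1\}$ with $(A,B,C)\to(a,b,z)$ impossible. *)

From Stdlib Require Import Reals List.
From Coquelicot Require Import Coquelicot.
Import ListNotations.
Open Scope R_scope.

Definition cexpi (phi : R) : C := (cos phi, sin phi).

(* Equatorial state |phi> = (|0> + e^{i phi}|1>)/sqrt 2, as a map from the
   computational basis (false = |0>, true = |1>) to amplitudes. *)
Definition eq_ket (phi : R) (x : bool) : C :=
  if x then Cmult (cexpi phi) (RtoC (/ sqrt 2)) else RtoC (/ sqrt 2).

(* Outcome bit a (0 <-> +1, 1 <-> -1) of measurement at angle A selects |A + a pi>. *)
Definition outcome_angle (A : R) (a : bool) : R := if a then A + PI else A.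

Definition state3 := bool -> bool -> bool -> C.

Definition sum_bool (f : bool -> C) : C := Cplus (f false) (f true).

(* (<A+a pi| (x) <B+b pi| (x) <C+c pi|) |psi> *)
Definition amplitude (psi : state3) (A B Cm : R) (a b c : bool) : C :=
  sum_bool (fun x => sum_bool (fun y => sum_bool (fun z =>
    Cmult (Cmult (Cmult (Cconj (eq_ket (outcome_angle A a) x))
                        (Cconj (eq_ket (outcome_angle B b) y)))
                 (Cconj (eq_ket (outcome_angle Cm c) z)))
          (psi x y z)))).

Definition impossible (psi : state3) (A B Cm : R) (a b c : bool) : Prop :=
  amplitude psi A B Cm a b c = RtoC 0.

Definition v_ket (lam : R) (z : bool) : C :=
  if z then RtoC (sin (lam / 2)) else RtoC (cos (lam / 2)).
Definition w_ket (lam : R) (z : bool) : C :=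
  if z then RtoC (cos (lam / 2)) else RtoC (sin (lam / 2)).

Definition B_state (lam : R) : state3 := fun x y z =>
  match x, y with
  | false, false => Cmult (RtoC (/ sqrt 2)) (v_ket lam z)
  | true, true => Cmult (RtoC (/ sqrt 2)) (w_ket lam z)
  | _, _ => RtoC 0
  end.

Definition angle_set (M : list R) : Prop :=
  NoDup M /\ M <> [] /\ (forall t, In t M -> 0 <= t < PI).

Definition maximally_impossible (psi : state3) (M1 M2 M3 : list R) : Prop :=
  forall Cm, In Cm M3 -> forall z : bool,
    (forall A, In A M1 -> exists B a b, In B M2 /\ impossible psi A B Cm a b z) /\
    (forall B, In B M2 -> exists A a b, In A M1 /\ impossible psi A B Cm a b z).

From Stdlib Require Import Reals List Lra Lia.
From Coquelicot Require Import Coquelicot.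
Open Scope R_scope.

(* For fixed C and z, the amplitude of |B(lambda)> on the event (A,B,C) -> (a,b,z) is
   affine in the phase e^{-i theta}, theta = (A + a pi) + (B + b pi), with slope
   d + c e^{-i gamma} (c = cos(lambda/2), d = sin(lambda/2), gamma = C + z pi), whose modulus
   is at least c - d > 0. Hence all impossible events with these C, z share the same phase,
   so A + B is fixed modulo pi. On angles in [0, pi) the relation "some event (A,B,C) -> (a,b,z)
   is impossible" is therefore injective in each argument, and maximal impossibility makes it
   total in both directions: it is a bijection between M1 and M2. *)

Definition sign (a : bool) : R := if a then -1 else 1.

Lemma sign_sqr (a : bool) : sign a * sign a = 1.
Proof. destruct a; simpl; ring. Qed.

Lemma cos_outcome_angle (A : R) (a : bool) : cos (outcome_angle A a) = sign a * cos A.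
Proof. destruct a; simpl; [rewrite neg_cos|]; ring. Qed.

Lemma sin_outcome_angle (A : R) (a : bool) : sin (outcome_angle A a) = sign a * sin A.
Proof. destruct a; simpl; [rewrite neg_sin|]; ring. Qed.

Lemma cos_outcome_angle_add (A B : R) (a b : bool) :
  cos (outcome_angle A a + outcome_angle B b) = sign a * sign b * cos (A + B).
Proof. rewrite cos_plus, !cos_outcome_angle, !sin_outcome_angle, cos_plus; ring. Qed.

Lemma sin_outcome_angle_add (A B : R) (a b : bool) :
  sin (outcome_angle A a + outcome_angle B b) = sign a * sign b * sin (A + B).
Proof. rewrite sin_plus, !cos_outcome_angle, !sin_outcome_angle, sin_plus; ring. Qed.

Lemma inv_sqrt2_pow4 : (/ sqrt 2) ^ 4 = / 4.
Proof.
  assert (sqrt2_sqr : sqrt 2 * sqrt 2 = 2) by (apply sqrt_sqrt; lra).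
  rewrite pow_inv.
  replace (sqrt 2 ^ 4) with (sqrt 2 * sqrt 2 * (sqrt 2 * sqrt 2)) by ring.
  rewrite sqrt2_sqr; f_equal; ring.
Qed.

Lemma amplitude_B_state (lam A B Cm : R) (a b z : bool) :
  let c := cos (lam / 2) in let d := sin (lam / 2) in
  let cg := cos (outcome_angle Cm z) in let sg := sin (outcome_angle Cm z) in
  let th := outcome_angle A a + outcome_angle B b in
  amplitude (B_state lam) A B Cm a b z =
    (/ 4 * (c + d * cg + (cos th * (d + c * cg) - sin th * (c * sg))),
     - (/ 4 * (d * sg + (sin th * (d + c * cg) + cos th * (c * sg))))).
Proof.
  intros c d cg sg th.
  rewrite <- inv_sqrt2_pow4; unfold th; rewrite cos_plus, sin_plus.
  unfold amplitude, sum_bool, B_state, eq_ket, v_ket, w_ket, cexpi.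
  apply injective_projections; simpl; unfold c, d, cg, sg; ring.
Qed.

Lemma complex_mul_cancel_r (x1 y1 x2 y2 p q : R) :
  p * p + q * q <> 0 ->
  x1 * p - y1 * q = x2 * p - y2 * q ->
  y1 * p + x1 * q = y2 * p + x2 * q ->
  x1 = x2 /\ y1 = y2.
Proof.
  intros pq_neq0 re_eq im_eq.
  assert (x_eq : (p * p + q * q) * (x1 - x2) = 0).
  { transitivity (p * (x1 * p - y1 * q - (x2 * p - y2 * q))
                  + q * (y1 * p + x1 * q - (y2 * p + x2 * q))); [ring|].
    rewrite re_eq, im_eq; ring. }
  assert (y_eq : (p * p + q * q) * (y1 - y2) = 0).
  { transitivity (p * (y1 * p + x1 * q - (y2 * p + x2 * q))
                  - q * (x1 * p - y1 * q - (x2 * p - y2 * q))); [ring|].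
    rewrite re_eq, im_eq; ring. }
  apply Rmult_integral in x_eq; apply Rmult_integral in y_eq.
  split; lra.
Qed.

Lemma sin_half_lt_cos_half (lam : R) :
  0 <= lam < PI / 2 -> 0 <= sin (lam / 2) < cos (lam / 2).
Proof.
  intros lam_range.
  assert (sin_ge0 : 0 <= sin (lam / 2)) by (apply sin_ge_0; lra).
  assert (cos_gt0 : 0 < cos (lam / 2)) by (apply cos_gt_0; lra).
  assert (cos_lam_gt0 : 0 < cos (2 * (lam / 2))) by (apply cos_gt_0; lra).
  rewrite cos_2a in cos_lam_gt0.
  split; nra.
Qed.

Lemma B_state_slope_pos (lam g : R) :
  0 <= lam < PI / 2 ->
  0 < (sin (lam / 2) + cos (lam / 2) * cos g) * (sin (lam / 2) + cos (lam / 2) * cos g)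
      + cos (lam / 2) * sin g * (cos (lam / 2) * sin g).
Proof.
  intros lam_range.
  destruct (sin_half_lt_cos_half lam lam_range) as [d_ge0 d_lt_c].
  set (c := cos (lam / 2)) in *; set (d := sin (lam / 2)) in *.
  pose proof (sin2_cos2 g) as pythagoras; unfold Rsqr in pythagoras.
  assert (cd_cos_ge : 0 <= c * d * (cos g + 1)).
  { pose proof (COS_bound g). apply Rmult_le_pos; nra. }
  replace ((d + c * cos g) * (d + c * cos g) + c * sin g * (c * sin g))
    with ((c - d) * (c - d) + 2 * (c * d * (cos g + 1))) by nra.
  nra.
Qed.

Lemma B_state_impossible_phase (lam A1 B1 A2 B2 Cm : R) (a1 b1 a2 b2 z : bool) :
  0 <= lam < PI / 2 ->
  impossible (B_state lam) A1 B1 Cm a1 b1 z ->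
  impossible (B_state lam) A2 B2 Cm a2 b2 z ->
  cos (outcome_angle A1 a1 + outcome_angle B1 b1) = cos (outcome_angle A2 a2 + outcome_angle B2 b2) /\
  sin (outcome_angle A1 a1 + outcome_angle B1 b1) = sin (outcome_angle A2 a2 + outcome_angle B2 b2).
Proof.
  unfold impossible; rewrite !amplitude_B_state.
  intros lam_range imp1 imp2.
  injection imp1 as re1 im1; injection imp2 as re2 im2.
  apply (complex_mul_cancel_r _ _ _ _
           (sin (lam / 2) + cos (lam / 2) * cos (outcome_angle Cm z))
           (cos (lam / 2) * sin (outcome_angle Cm z))).
  - apply Rgt_not_eq, B_state_slope_pos, lam_range.
  - lra.
  - lra.
Qed.

Lemma sin_sub_eq0_of_signed_eq (t1 t2 x1 x2 : R) :
  t1 * t1 = 1 -> t2 * t2 = 1 ->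
  t1 * cos x1 = t2 * cos x2 -> t1 * sin x1 = t2 * sin x2 ->
  sin (x1 - x2) = 0.
Proof.
  intros t1_sqr t2_sqr cos_eq sin_eq.
  assert (scaled : t1 * t2 * sin (x1 - x2) = 0).
  { rewrite sin_minus.
    transitivity ((t1 * sin x1) * (t2 * cos x2) - (t1 * cos x1) * (t2 * sin x2)); [ring|].
    rewrite cos_eq, sin_eq; ring. }
  assert (t_sqr : t1 * t2 * (t1 * t2) = 1).
  { transitivity (t1 * t1 * (t2 * t2)); [ring|]. rewrite t1_sqr, t2_sqr; ring. }
  apply Rmult_integral in scaled; destruct scaled as [t_eq0|]; [|assumption].
  rewrite t_eq0 in t_sqr; lra.
Qed.

Lemma sign_mul_sqr (a b : bool) : sign a * sign b * (sign a * sign b) = 1.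
Proof. transitivity (sign a * sign a * (sign b * sign b)); [ring|]. rewrite !sign_sqr; ring. Qed.

Lemma B_state_impossible_sum_angle (lam A1 B1 A2 B2 Cm : R) (a1 b1 a2 b2 z : bool) :
  0 <= lam < PI / 2 ->
  impossible (B_state lam) A1 B1 Cm a1 b1 z ->
  impossible (B_state lam) A2 B2 Cm a2 b2 z ->
  sin (A1 + B1 - (A2 + B2)) = 0.
Proof.
  intros lam_range imp1 imp2.
  destruct (B_state_impossible_phase _ _ _ _ _ _ _ _ _ _ _ lam_range imp1 imp2)
    as [cos_eq sin_eq].
  rewrite !cos_outcome_angle_add in cos_eq; rewrite !sin_outcome_angle_add in sin_eq.
  eapply sin_sub_eq0_of_signed_eq; eauto using sign_mul_sqr.
Qed.

Lemma sin_sub_eq0_eq (x y : R) : 0 <= x < PI -> 0 <= y < PI -> sin (x - y) = 0 -> x = y.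
Proof.
  intros x_range y_range sin_eq0.
  destruct (Rtotal_order x y) as [x_lt_y|[x_eq_y|y_lt_x]]; [|assumption|].
  - assert (sin_pos : 0 < sin (y - x)) by (apply sin_gt_0; lra).
    replace (y - x) with (- (x - y)) in sin_pos by ring.
    rewrite sin_neg in sin_pos; lra.
  - assert (sin_pos : 0 < sin (x - y)) by (apply sin_gt_0; lra).
    lra.
Qed.

Definition impossible_pair (lam Cm : R) (z : bool) (A B : R) : Prop :=
  exists a b, impossible (B_state lam) A B Cm a b z.

Lemma impossible_pair_functional (lam Cm A B1 B2 : R) (z : bool) :
  0 <= lam < PI / 2 -> 0 <= B1 < PI -> 0 <= B2 < PI ->
  impossible_pair lam Cm z A B1 -> impossible_pair lam Cm z A B2 -> B1 = B2.
Proof.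
  intros lam_range B1_range B2_range [a1 [b1 imp1]] [a2 [b2 imp2]].
  apply sin_sub_eq0_eq; try assumption.
  rewrite <- (B_state_impossible_sum_angle _ _ _ _ _ _ _ _ _ _ _ lam_range imp1 imp2).
  f_equal; ring.
Qed.

Lemma impossible_pair_injective (lam Cm A1 A2 B : R) (z : bool) :
  0 <= lam < PI / 2 -> 0 <= A1 < PI -> 0 <= A2 < PI ->
  impossible_pair lam Cm z A1 B -> impossible_pair lam Cm z A2 B -> A1 = A2.
Proof.
  intros lam_range A1_range A2_range [a1 [b1 imp1]] [a2 [b2 imp2]].
  apply sin_sub_eq0_eq; try assumption.
  rewrite <- (B_state_impossible_sum_angle _ _ _ _ _ _ _ _ _ _ _ lam_range imp1 imp2).
  f_equal; ring.
Qed.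

Lemma NoDup_length_le_rel {X Y : Type} (Y_eq_dec : forall y y' : Y, {y = y'} + {y <> y'})
    (P : X -> Y -> Prop) (l1 : list X) (l2 : list Y) :
  NoDup l1 ->
  (forall x x' y, In x l1 -> In x' l1 -> P x y -> P x' y -> x = x') ->
  (forall x, In x l1 -> exists y, In y l2 /\ P x y) ->
  (length l1 <= length l2)%nat.
Proof.
  revert l2; induction l1 as [|x l1 IH]; intros l2 nodup P_inj P_total; simpl; [lia|].
  inversion nodup as [|? ? x_notin nodup1]; subst.
  destruct (P_total x (or_introl eq_refl)) as [y [y_in Pxy]].
  pose proof (remove_length_lt Y_eq_dec l2 y y_in).
  enough ((length l1 <= length (remove Y_eq_dec y l2))%nat) by lia.
  apply IH; [assumption| |].
  - intros x1 x2 y' x1_in x2_in; apply P_inj; right; assumption.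
  - intros x' x'_in.
    destruct (P_total x' (or_intror x'_in)) as [y' [y'_in Px'y']].
    exists y'; split; [|assumption].
    apply in_in_remove; [|assumption].
    intros ->; apply x_notin.
    replace x with x'; [assumption|].
    apply (P_inj x' x y); simpl; auto.
Qed.

Theorem lemma11 (lam : R) (M1 M2 M3 : list R) :
  0 <= lam < PI / 2 ->
  angle_set M1 -> angle_set M2 -> angle_set M3 ->
  maximally_impossible (B_state lam) M1 M2 M3 ->
  length M1 = length M2.
Proof.
  intros lam_range [nodup1 [_ M1_range]] [nodup2 [_ M2_range]] [_ [M3_neq_nil _]] max_imp.
  destruct M3 as [|Cm M3]; [congruence|].
  destruct (max_imp Cm (or_introl eq_refl) false) as [total1 total2].
  apply Nat.le_antisymm.
  - apply (NoDup_length_le_rel Req_dec_T (impossible_pair lam Cm false)); [assumption| |].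
    + intros A1 A2 B A1_in A2_in.
      apply impossible_pair_injective; auto.
    + intros A A_in; destruct (total1 A A_in) as [B [a [b [B_in imp]]]].
      exists B; split; [assumption|exists a, b; assumption].
  - apply (NoDup_length_le_rel Req_dec_T (fun B A => impossible_pair lam Cm false A B));
      [assumption| |].
    + intros B1 B2 A B1_in B2_in.
      apply impossible_pair_functional; auto.
    + intros B B_in; destruct (total2 B B_in) as [A [a [b [A_in imp]]]].
      exists A; split; [assumption|exists a, b; assumption].
Qed.
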